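(* Let $N\ge1$, let $M=\prod_{i=1}^N M_i\subset\mathbb{R}^N$ be compact (each $M_i\subset\mathbb{R}$), and suppose $M\subset U=\prod_{i=1}^N U_i\subset\mathbb{C}^N$ with each $U_i$ an open domain of $\mathbb{C}$ symmetric about the real axis. Let $f:M\to\mathbb{R}$ be continuous. Then for every $\varepsilon>0$ there exist an integer $h\ge1$ and a CauchyNet $N_{\boldsymbol\theta,h}$ of hidden width $h$, with parameters $\boldsymbol\theta=(\mathbf{B},\mathbf{c})$, $\mathbf{B}\in\mathbb{C}^{h\times N}$, $\mathbf{c}\in\mathbb{C}^h$, such that $|f(\mathbf{x})-N_{\boldsymbol\theta,h}(\mathbf{x})|<\varepsilon$ for all $\mathbf{x}=(x_1,\dots,x_N)^{\mathrm T}\in M$.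
   Context: A CauchyNet with hidden width $h$ and parameters $\mathbf{B}=(b_{k,i})\in\mathbb{C}^{h\times N}$, $\mathbf{c}=(c_1,\dots,c_h)\in\mathbb{C}^h$ is the (complex-valued) function on $M$ given by $N_{\boldsymbol\theta,h}(\mathbf{x})=\sum_{k=1}^{h}c_k\prod_{i=1}^{N}(b_{k,i}-x_i)^{-1}$, where the parameters are such that no factor $b_{k,i}-x_i$ vanishes on $M$. (In the architecture each hidden neuron computes the Cauchy activation $\prod_i z_i^{-1}$ of the complex-shifted input, and the output is the $\mathbf{c}$-weighted sum of the hidden activations.) *)

From HB Require Import structures.
From mathcomp Require Import all_boot all_order all_algebra.
From mathcomp Require Import all_classical all_reals all_analysis.
From mathcomp Require Import complex.
Set Implicit Arguments. Unset Strict Implicit. Unset Printing Implicit Defensive.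
Import Order.TTheory GRing.Theory Num.Theory.
Import numFieldTopology.Exports numFieldNormedType.Exports.
Local Open Scope classical_set_scope.
Local Open Scope ring_scope.

(* The complex plane C = R[i], viewed as a normed (hence topological) space
   with its Euclidean modulus topology (through the regular algebra R[i]^o). *)
Notation Cplx R := ((R[i])^o) (only parsing).

Definition prodset (R : realType) (N : nat) (Mi : 'I_N -> set R) : set 'rV[R]_N :=
  [set x | forall i : 'I_N, Mi i (x ord0 i)].

Definition cauchynet (R : realType) (N h : nat)
    (B : 'M[R[i]]_(h, N)) (c : 'I_h -> R[i]) (x : 'rV[R]_N) : R[i] :=
  \sum_(k < h) c k * \prod_(i < N) (B k i - ((x ord0 i)%:C)%C)^-1.

(* Poles with positive imaginary part never meet the real points of M, and the
   uniform limits on M of CauchyNets form a complex vector space which is closed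
   under uniform limits.  Since iT / (iT - x_j) -> 1 uniformly on the bounded
   set M as T -> +oo, a factor (b_j - x_j)^-1 can be removed from a Cauchy term
   in the limit, so every partial product of Cauchy factors, and in particular
   the constant 1, is such a limit.  The partial fraction identity
   x_j / (b_j - x_j) = b_j / (b_j - x_j) - 1 shows that multiplication by x_j
   preserves the class, hence so does multiplication by any polynomial in the
   coordinates.  Finally f is uniformly approximated on M by a multivariate
   Bernstein polynomial in the coordinates rescaled to [0, 1]. *)

From HB Require Import structures.
From mathcomp Require Import all_boot all_order all_algebra.
From mathcomp Require Import all_classical all_reals all_analysis.
From mathcomp Require Import complex.
From mathcomp Require Import ring lra.
Set Implicit Arguments.
Unset Strict Implicit.
Unset Printing Implicit Defensive.

Import Order.TTheory GRing.Theory Num.Theory.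
Import numFieldTopology.Exports numFieldNormedType.Exports.
Local Open Scope classical_set_scope.
Local Open Scope ring_scope.

Section Bernstein.
Variable R : realFieldType.
Implicit Types (u t : R) (n : nat).

Definition bernstein n k u : R := 'C(n, k)%:R * u ^+ k * (1 - u) ^+ (n - k).

Lemma bernstein_ge0 n k u : 0 <= u <= 1 -> 0 <= bernstein n k u.
Proof.
by case/andP=> u0 u1; rewrite !mulr_ge0 ?exprn_ge0 ?subr_ge0.
Qed.

Lemma sum_bernstein n u : \sum_(k < n.+1) bernstein n k u = 1.
Proof.
have := exprDn (1 - u) u n; rewrite subrK expr1n => ->.
by apply: eq_bigr => k _; rewrite /bernstein -mulr_natr; ring.
Qed.

Lemma bernsteinS n k u :
  k.+1%:R * bernstein n.+1 k.+1 u = n.+1%:R * u * bernstein n k u.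
Proof.
have := congr1 (GRing.natmul (1 : R)) (mul_bin_diag n.+1 k).
by rewrite !natrM /bernstein subSS exprS => e; rewrite !mulrA -e; ring.
Qed.

Lemma sum_bernstein_mulk n u :
  \sum_(k < n.+1) k%:R * bernstein n k u = n%:R * u.
Proof.
case: n => [|n]; first by rewrite big_ord1 !mul0r.
rewrite big_ord_recl mul0r add0r.
under eq_bigr => k _ do rewrite (lift0 k) bernsteinS.
by rewrite -mulr_sumr sum_bernstein mulr1.
Qed.

Lemma sum_bernstein_mulkk n u :
  \sum_(k < n.+1) k%:R * (k%:R - 1) * bernstein n k u = n%:R * (n%:R - 1) * u ^+ 2.
Proof.
case: n => [|n]; first by rewrite big_ord1 !mul0r.
rewrite big_ord_recl !mul0r add0r.
under eq_bigr => k _ do rewrite (lift0 k) mulrAC bernsteinS -[k.+1%:R]natr1 addrK.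
rewrite (eq_bigr (fun k : 'I_n.+1 => n.+1%:R * u * (k%:R * bernstein n k u)));
  last by move=> k _; ring.
by rewrite -mulr_sumr sum_bernstein_mulk -[n.+1%:R]natr1 addrK; ring.
Qed.

Lemma sum_bernstein_var n u :
  \sum_(k < n.+1) (k%:R - n%:R * u) ^+ 2 * bernstein n k u = n%:R * u * (1 - u).
Proof.
have -> : \sum_(k < n.+1) (k%:R - n%:R * u) ^+ 2 * bernstein n k u =
    \sum_(k < n.+1) k%:R * (k%:R - 1) * bernstein n k u
  + (1 - 2 * n%:R * u) * \sum_(k < n.+1) k%:R * bernstein n k u
  + (n%:R * u) ^+ 2 * \sum_(k < n.+1) bernstein n k u.
  by rewrite !mulr_sumr -!big_split /=; apply: eq_bigr => k _; ring.
rewrite sum_bernstein_mulkk sum_bernstein_mulk sum_bernstein; ring.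
Qed.

Lemma sum_chebyshev (I : finType) (w g : I -> R) t :
  (forall k, 0 <= w k) -> 0 < t ->
  \sum_(k | t <= `|g k|) w k <= (\sum_k w k * g k ^+ 2) / t ^+ 2.
Proof.
move=> w0 t0; rewrite ler_pdivlMr ?exprn_gt0 // mulr_suml.
rewrite [leRHS](bigID (fun k => t <= `|g k|)) /= -[leLHS]addr0.
apply: lerD; last by apply: sumr_ge0 => k _; rewrite mulr_ge0 ?sqr_ge0.
apply: ler_sum => k tg; apply: ler_wpM2l => //.
rewrite -[g k ^+ 2]real_normK ?num_real //.
by apply: lerXn2r; rewrite // nnegrE ?normr_ge0 ?(ltW t0).
Qed.

Lemma sum_bernstein_tail n u (eta : R) : 0 <= u <= 1 -> 0 < eta -> (0 < n)%N ->
  \sum_(k < n.+1 | eta <= `|k%:R / n%:R - u|) bernstein n k u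
    <= (4 * n%:R * eta ^+ 2)^-1.
Proof.
move=> u01 eta0 n0; have n0' : n%:R != 0 :> R by rewrite pnatr_eq0 -lt0n.
apply: le_trans (sum_chebyshev (fun k : 'I_n.+1 => k%:R / n%:R - u)
  (fun k => bernstein_ge0 n k u01) eta0) _.
have -> : \sum_(k < n.+1) bernstein n k u * (k%:R / n%:R - u) ^+ 2
    = u * (1 - u) / n%:R.
  transitivity (\sum_(k < n.+1) (k%:R - n%:R * u) ^+ 2 * bernstein n k u / n%:R ^+ 2).
    by apply: eq_bigr => k _; field.
  by rewrite -mulr_suml sum_bernstein_var; field.
rewrite -mulrA -invfM -[4 * _ * _]mulrA [in leRHS]invfM.
rewrite ler_pM2r ?invr_gt0 ?mulr_gt0 ?ltr0n ?exprn_gt0 // -[leRHS]div1r.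
by rewrite ler_pdivlMr //; have := sqr_ge0 (2 * u - 1); nra.
Qed.

End Bernstein.

Section FiniteSums.
Variable R : realFieldType.

Lemma sum_exists_le (I J : finType) (P : I -> pred J) (w : J -> R) :
  (forall j, 0 <= w j) ->
  \sum_(j | [exists i, P i j]) w j <= \sum_i \sum_(j | P i j) w j.
Proof.
move=> w0; under [leRHS]eq_bigr do rewrite big_mkcond.
rewrite exchange_big big_mkcond /=; apply: ler_sum => j _.
case: existsP => [[i Pij] | _]; last by apply: sumr_ge0 => i _; case: ifP.
rewrite (bigD1 i) //= Pij lerDl; apply: sumr_ge0 => i' _; by case: ifP.
Qed.

Lemma convex_comb_dist_le (I : finType) (w v : I -> R) (P : pred I) (a e C : R) :
  (forall k, 0 <= w k) -> \sum_k w k = 1 -> 0 <= e ->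
  (forall k, ~~ P k -> `|a - v k| <= e) -> (forall k, `|a - v k| <= C) ->
  `|a - \sum_k v k * w k| <= e + C * \sum_(k | P k) w k.
Proof.
move=> w0 w1 e0 vnP vC.
have -> : a - \sum_k v k * w k = \sum_k (a - v k) * w k.
  rewrite -[a in LHS]mulr1 -w1 mulr_sumr -sumrB.
  by apply: eq_bigr => k _; rewrite mulrBl.
apply: le_trans (ler_norm_sum _ _ _) _.
rewrite (bigID P) /= addrC; apply: lerD.
  apply: (@le_trans _ _ (\sum_(k | ~~ P k) e * w k)).
    by apply: ler_sum => k nPk; rewrite normrM (ger0_norm (w0 k)) ler_wpM2r ?vnP.
  rewrite -mulr_sumr -[leRHS]mulr1 ler_wpM2l // -w1 [leRHS](bigID P) /= lerDr.
  exact: sumr_ge0.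
rewrite mulr_sumr; apply: ler_sum => k _.
by rewrite normrM (ger0_norm (w0 k)) ler_wpM2r.
Qed.

End FiniteSums.

Section BernsteinProduct.
Variables (R : realFieldType) (N n : nat).
Local Notation multi_index := {ffun 'I_N -> 'I_n.+1}.
Implicit Types (u : 'I_N -> R) (k : multi_index).

Definition bernstein_prod u k : R := \prod_(i < N) bernstein n (k i) (u i).

Lemma bernstein_prod_ge0 u k :
  (forall i, 0 <= u i <= 1) -> 0 <= bernstein_prod u k.
Proof. by move=> u01; apply: prodr_ge0 => i _; apply: bernstein_ge0. Qed.

Lemma sum_bernstein_prod u : \sum_k bernstein_prod u k = 1.
Proof.
rewrite -(bigA_distr_bigA (fun i (m : 'I_n.+1) => bernstein n m (u i))) /=.
by rewrite big1 // => i _; apply: sum_bernstein.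
Qed.

Lemma sum_bernstein_prod_coord u i (P : pred 'I_n.+1) :
  \sum_(k : multi_index | P (k i)) bernstein_prod u k
    = \sum_(m < n.+1 | P m) bernstein n m (u i).
Proof.
pose G j (m : 'I_n.+1) := if j == i then (P m)%:R * bernstein n m (u j)
                          else bernstein n m (u j).
transitivity (\sum_(k : multi_index) \prod_j G j (k j)).
  rewrite big_mkcond; apply: eq_bigr => k _.
  rewrite [RHS](bigD1 i) //= {1}/G eqxx.
  rewrite (eq_bigr (fun j => bernstein n (k j) (u j))) => [|j /negbTE ji]; last first.
    by rewrite /G ji.
  by rewrite /bernstein_prod (bigD1 i) //=; case: (P (k i)); rewrite ?mul1r ?mul0r.
rewrite -(bigA_distr_bigA G) (bigD1 i) //= [X in _ * X]big1 => [|j ji]; last first.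
  by rewrite /G (negbTE ji) sum_bernstein.
rewrite mulr1 /G eqxx [RHS]big_mkcond; apply: eq_bigr => m _.
by case: (P m); rewrite ?mul1r ?mul0r.
Qed.

Lemma sum_bernstein_prod_tail u (eta : R) :
  (forall i, 0 <= u i <= 1) -> 0 < eta -> (0 < n)%N ->
  \sum_(k : multi_index | [exists i, eta <= `|(k i)%:R / n%:R - u i|])
      bernstein_prod u k <= N%:R / (4 * n%:R * eta ^+ 2).
Proof.
move=> u01 eta0 n0.
apply: le_trans (sum_exists_le _ (fun k => bernstein_prod_ge0 k u01)) _.
have -> : N%:R / (4 * n%:R * eta ^+ 2) = \sum_(i < N) (4 * n%:R * eta ^+ 2)^-1.
  by rewrite sumr_const card_ord mulr_natl.
apply: ler_sum => i _.
rewrite (sum_bernstein_prod_coord u i (fun m => eta <= `|m%:R / n%:R - u i|)).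
exact: sum_bernstein_tail.
Qed.

Lemma bernstein_prod_dist_le u (v : multi_index -> R) (a e C eta : R) :
  (forall i, 0 <= u i <= 1) -> 0 < eta -> (0 < n)%N -> 0 <= e -> 0 <= C ->
  (forall k, (forall i, `|(k i)%:R / n%:R - u i| < eta) -> `|a - v k| <= e) ->
  (forall k, `|a - v k| <= C) ->
  `|a - \sum_k v k * bernstein_prod u k| <= e + C * (N%:R / (4 * n%:R * eta ^+ 2)).
Proof.
move=> u01 eta0 n0 e0 C0 near vC.
pose far (k : multi_index) := [exists i, eta <= `|(k i)%:R / n%:R - u i|].
apply: le_trans (convex_comb_dist_le (P := far) (fun k => bernstein_prod_ge0 k u01)
  (sum_bernstein_prod u) e0 _ vC) _.
  by move=> k /existsPn nfar; apply: near => i; rewrite ltNge nfar.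
by rewrite lerD2l ler_wpM2l // sum_bernstein_prod_tail.
Qed.

End BernsteinProduct.

Section CompactSets.
Variable R : realType.

Lemma compact_continuous_bounded (T : ptopologicalType) (A : set T) (g : T -> R) :
  compact A -> {within A, continuous g} -> exists F, forall x, A x -> `|g x| <= F.
Proof.
move=> cA cg; have [F [_ HF]] := compact_bounded (continuous_compact cg cA).
by exists (F + 1) => x Ax; apply: (HF (F + 1)); [rewrite ltrDl | exists x].
Qed.

Lemma compact_coord_bounded (N : nat) (A : set 'rV[R]_N) :
  compact A -> exists2 K, 0 < K & forall x, A x -> forall i, `|x ord0 i| <= K.
Proof.
move=> /compact_bounded[r [_ Hr]]; exists (`|r| + 1) => [|x Ax i].
  by rewrite ltr_wpDl.
apply: le_trans (Hr (`|r| + 1) _ x Ax); last first.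
  by rewrite (le_lt_trans (ler_norm r)) // ltrDl.
by rewrite [leRHS]mx_normrE (le_bigmax _ (fun ij => `|x ij.1 ij.2|) (ord0, i)).
Qed.

Lemma compact_unif_continuous (V : pseudoMetricNormedZmodType R) (A : set V)
    (f : V -> R) : compact A -> {within A, continuous f} ->
  forall e, 0 < e -> exists2 d, 0 < d &
    forall x y, A x -> A y -> ball x d y -> `|f x - f y| < e.
Proof.
move=> cA cf e e0; have e2 : 0 < e / 2 by rewrite divr_gt0.
have /choice[d dP] : forall p, exists d : R, 0 < d /\
    (A p -> forall y, A y -> ball p d y -> `|f p - f y| < e / 2).
  move=> p; have [Ap|nAp] := pselect (A p); last by exists 1; split => // /nAp.
  have /cvgrPdist_lt/(_ _ e2) := (subspace_continuousP _ _).1 cf p Ap.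
  rewrite near_withinE => /nbhs_ballP[d d0 Hd].
  by exists d; split => // _ y Ay pdy; apply: Hd.
have d0 p : 0 < d p by case: (dP p).
have Acov : A `<=` \bigcup_(p in A) ball p (d p / 2).
  by move=> x Ax; exists x => //; apply: ballxx; rewrite divr_gt0.
move: cA; rewrite compact_cover => /(_ _ A _ (fun p _ => ball_open p _) Acov).
case=> D DA Dcov.
exists (\big[Num.min/1]_(p <- finmap.enum_fset D) (d p / 2)) => [|x y Ax Ay xy].
  by apply: lt_bigmin => // p _; rewrite divr_gt0.
have [p Dp px] := Dcov x Ax.
have Ap : A p by apply/set_mem/DA.
have [_ Hp] := dP p.
have py : ball p (d p) y.
  rewrite (splitr (d p)); apply: ball_triangle px (le_ball _ xy).
  exact: ge_bigmin_seq.
have px' : ball p (d p) x.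
  by apply: le_ball px; rewrite ler_pdivrMr ?ler_peMr ?ler1n ?ltW.
rewrite (splitr e); apply: le_lt_trans (ler_distD (f p) _ _) _.
by rewrite distrC ltrD ?Hp.
Qed.

End CompactSets.

Lemma exists_representatives (I : Type) (T : choiceType) (A : set T) (P : I -> set T) :
  A !=set0 ->
  exists q : I -> T, (forall k, A (q k)) /\ forall k x, A x -> P k x -> P k (q k).
Proof.
case=> x0 Ax0; exists (fun k => xget x0 (A `&` P k)); split=> [k|k x Ax Pkx].
  by case: xgetP => [y _ []|].
by case: (@xgetI _ x0 (A `&` P k) x (conj Ax Pkx)).
Qed.

Section BernsteinApproximation.
Variables (R : realType) (N : nat) (M : set 'rV[R]_N) (K : R).
Hypotheses (K0 : 0 < K) (MK : forall x, M x -> forall i, `|x ord0 i| <= K).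

Definition rescale (t : R) : R := (t + K) / (2 * K).

Lemma rescale01 t : `|t| <= K -> 0 <= rescale t <= 1.
Proof.
rewrite ler_norml => /andP[t1 t2]; rewrite /rescale divr_ge0 ?mulr_ge0 /=; try lra.
by rewrite ler_pdivrMr ?mulr_gt0 //; lra.
Qed.

Lemma rescale_ball (c : 'I_N -> R) (eta : R) (x y : 'rV[R]_N) : 0 < eta ->
  (forall i, `|c i - rescale (x ord0 i)| < eta) ->
  (forall i, `|c i - rescale (y ord0 i)| < eta) -> ball x (4 * K * eta) y.
Proof.
move=> eta0 cx cy; split=> [|i j]; first by rewrite !mulr_gt0.
rewrite (ord1 i) /ball /=.
have -> : x ord0 j - y ord0 j = 2 * K * (rescale (x ord0 j) - rescale (y ord0 j)).
  by rewrite /rescale; field; rewrite gt_eqF.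
rewrite normrM gtr0_norm ?mulr_gt0 //.
rewrite (_ : 4 * K * eta = 2 * K * (2 * eta)); last by ring.
rewrite ltr_pM2l ?mulr_gt0 //; apply: le_lt_trans (ler_distD (c j) _ _) _.
by rewrite distrC; have := cx j; have := cy j; lra.
Qed.

Definition bernstein_rescale_poly n k : {poly R} :=
  let a := ('X + K%:P) * ((2 * K)^-1)%:P in
  'C(n, k)%:R%:P * a ^+ k * (1 - a) ^+ (n - k).

Lemma horner_bernstein_rescale n k t :
  (bernstein_rescale_poly n k).[t] = bernstein n k (rescale t).
Proof. by rewrite /bernstein /rescale !hornerE. Qed.

Theorem bernstein_approx (f : 'rV[R]_N -> R) :
  compact M -> {within M, continuous f} -> forall e, 0 < e ->
  exists n (v : {ffun 'I_N -> 'I_n.+1} -> R), forall x, M x ->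
    `|f x - \sum_k v k * bernstein_prod (fun i => rescale (x ord0 i)) k| < e.
Proof.
move=> cM cf e e0; have [M0|nM0] := pselect (M !=set0); last first.
  by exists 0%N, (fun=> 0) => x Mx; case: nM0; exists x.
have [F HF] := compact_continuous_bounded cM cf.
have [d d0 fd] := compact_unif_continuous cM cf (divr_gt0 e0 (ltr0Sn _ 1)).
pose eta := d / (4 * K); have eta0 : 0 < eta by rewrite divr_gt0 ?mulr_gt0.
pose n := (Num.trunc (F * N%:R / (e * eta ^+ 2))).+1.
have hn : F * N%:R < e * n%:R * eta ^+ 2.
  rewrite (_ : e * n%:R * eta ^+ 2 = n%:R * (e * eta ^+ 2)); last by ring.
  have := truncnS_gt (F * N%:R / (e * eta ^+ 2)); rewrite -/n.
  by rewrite ltr_pdivrMr // mulr_gt0 // exprn_gt0.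
(* f is only known on M, so the value at the node k/n is taken at a point
   q k of M near that node, if there is one. *)
pose near_node (k : {ffun 'I_N -> 'I_n.+1}) (y : 'rV[R]_N) :=
  forall i, `|(k i)%:R / n%:R - rescale (y ord0 i)| < eta.
have [q [Mq near_q]] := exists_representatives near_node M0.
exists n, (fun k => f (q k)) => x Mx.
have F0 : 0 <= F := le_trans (normr_ge0 _) (HF x Mx).
apply: le_lt_trans
  (bernstein_prod_dist_le (e := e / 2) (C := 2 * F) _ eta0 _ _ _ _ _) _.
- by move=> i; apply/rescale01/MK.
- by [].
- by rewrite divr_ge0 ?ltW.
- by rewrite mulr_ge0.
- move=> k nx; apply/ltW/fd => //.
  rewrite (_ : d = 4 * K * eta); last by rewrite /eta; field; rewrite gt_eqF.
  exact: rescale_ball eta0 nx (near_q k x Mx nx).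
- move=> k; apply: le_trans (ler_normB _ _) _.
  by have := HF x Mx; have := HF _ (Mq k); lra.
rewrite [ltRHS]splitr ltrD2l mulrA ltr_pdivrMr; last first.
  by rewrite mulr_gt0 ?exprn_gt0 // mulr_gt0.
lra.
Qed.

End BernsteinApproximation.

Section ComplexEstimates.
Variable R : rcfType.
Local Open Scope complex_scope.
Implicit Types (b z : R[i]) (t : R).

Lemma normc_real t : `|t%:C| = `|t|%:C.
Proof. by rewrite normc_def /= expr0n addr0 sqrtr_sqr. Qed.

Lemma normc_ge_Im z : (complex.Im z)%:C <= `|z|.
Proof.
rewrite normc_def lecR; apply: le_trans (ler_norm _) _.
by rewrite -sqrtr_sqr ler_sqrt ?addr_ge0 ?sqr_ge0 // lerDr sqr_ge0.
Qed.

Lemma normc_subr_ge_Im b t : (complex.Im b)%:C <= `|b - t%:C|.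
Proof. by have := normc_ge_Im (b - t%:C); rewrite raddfB /= subr0. Qed.

Lemma subr_real_neq0 b t : 0 < complex.Im b -> b - t%:C != 0.
Proof.
by move=> b0; rewrite -normr_gt0 (lt_le_trans _ (normc_subr_ge_Im b t)) ?ltcR.
Qed.

Lemma normcV_subr_le b t :
  0 < complex.Im b -> `|(b - t%:C)^-1| <= ((complex.Im b)^-1)%:C.
Proof.
move=> b0; rewrite normfV fmorphV /= lef_pV2 ?normc_subr_ge_Im //.
  by rewrite posrE normr_gt0 subr_real_neq0.
by rewrite posrE ltcR.
Qed.

Lemma normc_1_sub_iT T t : 0 < T -> `|1 - T*i / (T*i - t%:C)| <= (`|t| / T)%:C.
Proof.
move=> T0; have nz : T*i - t%:C != 0 by apply: subr_real_neq0.
have -> : 1 - T*i / (T*i - t%:C) = - t%:C / (T*i - t%:C) by field.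
rewrite normrM normrN normc_real rmorphM /= ler_pM ?normr_ge0 //; first by rewrite lecR.
exact: normcV_subr_le.
Qed.

End ComplexEstimates.

Section CauchyNets.
Variables (R : realType) (N : nat).
Local Open Scope complex_scope.
Implicit Types (x : 'rV[R]_N) (b : 'I_N -> R[i]) (P : pred 'I_N).

Definition cauchy_factors (P : pred 'I_N) (b : 'I_N -> R[i]) (x : 'rV[R]_N) : R[i] :=
  \prod_(i < N | P i) (b i - (x ord0 i)%:C)^-1.

Definition upper_poles h (B : 'M[R[i]]_(h, N)) := forall k i, 0 < complex.Im (B k i).

Definition cat_weights h1 h2 (c1 : 'I_h1 -> R[i]) (c2 : 'I_h2 -> R[i]) :
  'I_(h1 + h2) -> R[i] := row_mx (\row_k c1 k) (\row_k c2 k) ord0.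

Lemma cauchynetE h (B : 'M[R[i]]_(h, N)) c x :
  cauchynet B c x = \sum_(k < h) c k * cauchy_factors predT (B k) x.
Proof. by []. Qed.

Lemma cauchynet_row b x :
  cauchynet (\matrix_(k < 1, i < N) b i) (fun=> 1) x = cauchy_factors predT b x.
Proof.
rewrite /cauchynet big_ord1 mul1r; apply: eq_bigr => i _.
by rewrite [X in X - _]mxE.
Qed.

Lemma cauchynet0 h (B : 'M[R[i]]_(h, N)) x : cauchynet B (fun=> 0) x = 0.
Proof. by rewrite /cauchynet big1 // => k _; rewrite mul0r. Qed.

Lemma cauchynetZ h (B : 'M[R[i]]_(h, N)) c a x :
  cauchynet B (fun k => a * c k) x = a * cauchynet B c x.
Proof. by rewrite /cauchynet mulr_sumr; apply: eq_bigr => k _; rewrite mulrA. Qed.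

Lemma cauchynet_col_mx h1 h2 (B1 : 'M[R[i]]_(h1, N)) (B2 : 'M[R[i]]_(h2, N)) c1 c2 x :
  cauchynet (col_mx B1 B2) (cat_weights c1 c2) x
    = cauchynet B1 c1 x + cauchynet B2 c2 x.
Proof.
rewrite /cauchynet big_split_ord /cat_weights; congr (_ + _); apply: eq_bigr => k _.
  by rewrite row_mxEl mxE; under eq_bigr do rewrite col_mxEu.
by rewrite row_mxEr mxE; under eq_bigr do rewrite col_mxEd.
Qed.

Lemma upper_poles_col_mx h1 h2 (B1 : 'M[R[i]]_(h1, N)) (B2 : 'M[R[i]]_(h2, N)) :
  upper_poles B1 -> upper_poles B2 -> upper_poles (col_mx B1 B2).
Proof.
move=> B1P B2P k i; rewrite -(splitK k).
by case: (fintype.split k) => j /=; rewrite ?col_mxEu ?col_mxEd.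
Qed.

Lemma factors_mulx b j x : 0 < complex.Im (b j) ->
  (x ord0 j)%:C * cauchy_factors predT b x
    = b j * cauchy_factors predT b x - cauchy_factors (predC1 j) b x.
Proof.
move=> bj; rewrite /cauchy_factors (bigD1 j) //=.
have nz := subr_real_neq0 (x ord0 j) bj.
by field.
Qed.

Lemma factors_predU1 P b j x : ~~ P j ->
  cauchy_factors (predU1 j P) b x = (b j - (x ord0 j)%:C)^-1 * cauchy_factors P b x.
Proof.
move=> Pj; rewrite /cauchy_factors (bigD1 j) /= ?eqxx //; congr (_ * _).
by apply: eq_bigl => i /=; case: (i =P j) => [->|_]; rewrite ?(negbTE Pj) ?andbT.
Qed.

Lemma norm_factors_le P b x : (forall i, 0 < complex.Im (b i)) ->
  `|cauchy_factors P b x| <= (\prod_(i < N | P i) (complex.Im (b i))^-1)%:C.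
Proof.
move=> bP; rewrite normr_prod rmorph_prod; apply: ler_prod => i _.
by rewrite normr_ge0 normcV_subr_le.
Qed.

End CauchyNets.

Section CauchyApproximation.
Variables (R : realType) (N : nat) (M : set 'rV[R]_N).
Local Open Scope complex_scope.
Implicit Types (x : 'rV[R]_N) (g : 'rV[R]_N -> R[i]) (b : 'I_N -> R[i]).

Definition cauchy_approximable g := forall e : R, 0 < e ->
  exists h (B : 'M[R[i]]_(h, N)) c,
    upper_poles B /\ forall x, M x -> `|g x - cauchynet B c x| < e%:C.

Lemma approximable_eq g1 g2 : {in M, g1 =1 g2} ->
  cauchy_approximable g1 -> cauchy_approximable g2.
Proof.
move=> g12 ag1 e e0; have [h [B [c [BP gB]]]] := ag1 e e0.
by exists h, B, c; split=> // x Mx; rewrite -g12 ?inE //; apply: gB.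
Qed.

Lemma approximable0 : cauchy_approximable (fun=> 0).
Proof.
move=> e e0; exists 0%N, 0, (fun=> 0); split=> [[]//|x _].
by rewrite cauchynet0 subr0 normr0 ltcR.
Qed.

Lemma approximable_lim g : (forall e : R, 0 < e ->
    exists g', cauchy_approximable g' /\ forall x, M x -> `|g x - g' x| < e%:C) ->
  cauchy_approximable g.
Proof.
move=> gl e e0; have e2 : 0 < e / 2 by rewrite divr_gt0.
have [g' [ag' gg']] := gl _ e2; have [h [B [c [BP gB]]]] := ag' _ e2.
exists h, B, c; split=> // x Mx; rewrite (splitr e) rmorphD.
rewrite -(subrK (g' x) (g x)) -addrA.
by apply: le_lt_trans (ler_normD _ _) _; rewrite ltrD ?gg' ?gB.
Qed.

Lemma approximableD g1 g2 : cauchy_approximable g1 -> cauchy_approximable g2 ->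
  cauchy_approximable (fun x => g1 x + g2 x).
Proof.
move=> ag1 ag2 e e0; have e2 : 0 < e / 2 by rewrite divr_gt0.
have [h1 [B1 [c1 [B1P gB1]]]] := ag1 _ e2; have [h2 [B2 [c2 [B2P gB2]]]] := ag2 _ e2.
exists (h1 + h2)%N, (col_mx B1 B2), (cat_weights c1 c2).
split=> [|x Mx]; first exact: upper_poles_col_mx.
rewrite cauchynet_col_mx opprD addrACA (splitr e) rmorphD.
by apply: le_lt_trans (ler_normD _ _) _; rewrite ltrD ?gB1 ?gB2.
Qed.

Lemma approximableZ a g :
  cauchy_approximable g -> cauchy_approximable (fun x => a * g x).
Proof.
move=> ag e e0; have [r r0 ar] : exists2 r : R, 0 < r & `|a| <= r%:C.
  exists (Num.sqrt (complex.Re a ^+ 2 + complex.Im a ^+ 2) + 1).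
    by rewrite ltr_wpDl ?sqrtr_ge0.
  by rewrite normc_def lecR lerDl.
have [h [B [c [BP gB]]]] := ag _ (divr_gt0 e0 r0).
exists h, B, (fun k => a * c k); split=> // x Mx.
rewrite cauchynetZ -mulrBr normrM (_ : e = r * (e / r)); last by field; rewrite gt_eqF.
rewrite rmorphM; apply: le_lt_trans (ler_wpM2r (normr_ge0 _) ar) _.
by rewrite ltr_pM2l ?gB // ltcR.
Qed.

Lemma approximable_factorsT b : (forall i, 0 < complex.Im (b i)) ->
  cauchy_approximable (cauchy_factors predT b).
Proof.
move=> bP e e0; exists 1%N, (\matrix_(k < 1, i < N) b i), (fun=> 1).
split=> [k i|x _]; first by rewrite [X in complex.Im X]mxE.
by rewrite cauchynet_row subrr normr0 ltcR.
Qed.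

Lemma approximable_sum (I : Type) (r : seq I) (F : I -> 'rV[R]_N -> R[i]) :
  (forall i, cauchy_approximable (F i)) ->
  cauchy_approximable (fun x => \sum_(i <- r) F i x).
Proof.
move=> aF; elim: r => [|i r IH].
  by apply: approximable_eq approximable0 => x _; rewrite big_nil.
by apply: approximable_eq (approximableD (aF i) IH) => x _; rewrite big_cons.
Qed.

End CauchyApproximation.

Section BoundedDomain.
Variables (R : realType) (N : nat) (M : set 'rV[R]_N) (K : R).
Hypotheses (K0 : 0 < K) (MK : forall x, M x -> forall i, `|x ord0 i| <= K).
Local Open Scope complex_scope.
Implicit Types (x : 'rV[R]_N) (g : 'rV[R]_N -> R[i]) (b : 'I_N -> R[i]) (P : pred 'I_N).
Local Notation approximable := (cauchy_approximable M).

Lemma norm_factors_predU1_iT P b b' j T x : M x -> ~~ P j -> 0 < T ->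
  b' j = T*i -> {in P, b' =1 b} -> (forall i, 0 < complex.Im (b i)) ->
  `|cauchy_factors P b x - T*i * cauchy_factors (predU1 j P) b' x|
    <= (K / T * \prod_(i < N | P i) (complex.Im (b i))^-1)%:C.
Proof.
move=> Mx Pj T0 b'j b'b bP.
rewrite factors_predU1 // b'j.
have -> : cauchy_factors P b' x = cauchy_factors P b x.
  by apply: eq_bigr => i Pi; rewrite b'b.
rewrite mulrA -{1}[cauchy_factors P b x]mul1r -mulrBl normrM.
apply: le_trans (ler_pM (normr_ge0 _) (normr_ge0 _) (normc_1_sub_iT _ T0)
  (norm_factors_le P x bP)) _.
rewrite -rmorphM lecR; apply: ler_wpM2r.
  by apply: prodr_ge0 => i _; rewrite invr_ge0 ltW.
by apply: ler_wpM2r; [rewrite invr_ge0 ltW | apply: MK].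
Qed.

Lemma approximable_factors_drop P b j : ~~ P j -> (forall i, 0 < complex.Im (b i)) ->
  (forall b', (forall i, 0 < complex.Im (b' i)) ->
    approximable (cauchy_factors (predU1 j P) b')) ->
  approximable (cauchy_factors P b).
Proof.
move=> Pj bP IH; apply: approximable_lim => e e0.
pose Q := \prod_(i < N | P i) (complex.Im (b i))^-1.
pose T := K * Q / e + 1.
have T0 : 0 < T.
  rewrite ltr_wpDl ?divr_ge0 ?mulr_ge0 ?prodr_ge0 ?ltW // => i _.
  by rewrite invr_ge0 ltW.
pose b' i := if i == j then T*i else b i.
have b'P i : 0 < complex.Im (b' i) by rewrite /b'; case: eqP.
exists (fun x => T*i * cauchy_factors (predU1 j P) b' x).
split=> [|x Mx]; first exact: approximableZ (IH _ b'P).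
apply: le_lt_trans (norm_factors_predU1_iT Mx Pj T0 _ _ bP) _.
- by rewrite /b' eqxx.
- by move=> i Pi; rewrite /b'; case: eqP Pi => // -> jP; case/negP: Pj.
rewrite ltcR -/Q mulrAC ltr_pdivrMr // /T mulrDr mulr1 mulrCA divff ?gt_eqF //.
by rewrite mulr1 ltrDl.
Qed.

Lemma approximable_factors P b : (forall i, 0 < complex.Im (b i)) ->
  approximable (cauchy_factors P b).
Proof.
move: {2}#|[predC P]| (erefl #|[predC P]|) => m.
elim: m P b => [|m IH] P b cardP bP.
  apply: approximable_eq (approximable_factorsT M bP) => x _.
  apply: eq_bigl => i /=; apply/esym/negbFE.
  by have := card0_eq cardP i; rewrite !inE.
have /card_gt0P[j Pj] : (0 < #|[predC P]|)%N by rewrite cardP.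
rewrite inE in Pj; apply: (approximable_factors_drop Pj bP) => b' b'P.
apply: IH b'P; move: cardP; rewrite (cardD1 j) inE Pj add1n => -[<-].
by apply: eq_card => i; rewrite !inE negb_or.
Qed.

Lemma approximable_mulx j g :
  approximable g -> approximable (fun x => (x ord0 j)%:C * g x).
Proof.
move=> ag; apply: approximable_lim => e e0.
have K1 : 0 < K + 1 by rewrite ltr_wpDl ?ltW.
have [h [B [c [BP gB]]]] := ag _ (divr_gt0 e0 K1).
exists (fun x => (x ord0 j)%:C * cauchynet B c x); split=> [|x Mx].
  apply: approximable_eq (approximable_sum (index_enum _) (fun k =>
      approximableD (approximableZ (c k * B k j) (approximable_factors predT (BP k)))
                    (approximableZ (- c k) (approximable_factors (predC1 j) (BP k))))).
  move=> x _; rewrite cauchynetE mulr_sumr; apply: eq_bigr => k _.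
  by rewrite mulrCA factors_mulx // mulrBr mulrA mulNr.
rewrite -mulrBr normrM normc_real.
apply: le_lt_trans (ler_pM _ (normr_ge0 _) (_ : _ <= K%:C) (ltW (gB x Mx))) _.
- by rewrite lecR.
- by rewrite lecR MK.
rewrite -rmorphM ltcR mulrA ltr_pdivrMr //; lra.
Qed.

Lemma approximable_mul_poly j (p : {poly R}) g : approximable g ->
  approximable (fun x => g x * (p.[x ord0 j])%:C).
Proof.
move=> ag; elim/poly_ind: p => [|p a IH] /=.
  by apply: approximable_eq (approximable0 M) => x _; rewrite horner0 mulr0.
apply: approximable_eq (approximableD (approximable_mulx j IH) (approximableZ a%:C ag)).
by move=> x _; rewrite !hornerE rmorphD rmorphM /=; ring.
Qed.

Lemma approximable1 : approximable (fun=> 1).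
Proof.
apply: approximable_eq (approximable_factors pred0 (b := fun=> 'i) (fun=> ltr01)).
by move=> x _; rewrite /cauchy_factors big_pred0_eq.
Qed.

Lemma approximable_prod_poly (r : seq 'I_N) (p : 'I_N -> {poly R}) :
  approximable (fun x => (\prod_(i <- r) (p i).[x ord0 i])%:C).
Proof.
elim: r => [|i r IH].
  by apply: approximable_eq approximable1 => x _; rewrite big_nil.
apply: approximable_eq (approximable_mul_poly i (p i) IH) => x _.
by rewrite big_cons rmorphM mulrC.
Qed.

End BoundedDomain.

Theorem continuous_cauchy_approximable (R : realType) (N : nat) (M : set 'rV[R]_N)
    (f : 'rV[R]_N -> R) : compact M -> {within M, continuous f} ->
  cauchy_approximable M (fun x => (f x)%:C%C).
Proof.
move=> cM cf; have [K K0 MK] := compact_coord_bounded cM.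
apply: approximable_lim => e e0.
have [n [v fv]] := bernstein_approx K0 MK cM cf e0.
exists (fun x => (\sum_k v k * bernstein_prod (fun i => rescale K (x ord0 i)) k)%:C%C).
split=> [|x Mx]; last by rewrite -rmorphB normc_real ltcR fv.
apply: approximable_eq (approximable_sum (index_enum _) (fun k =>
  approximableZ (v k)%:C%C (approximable_prod_poly K0 MK (index_enum 'I_N)
    (fun i => bernstein_rescale_poly K n (k i))))).
move=> x _; rewrite rmorph_sum; apply: eq_bigr => k _; rewrite rmorphM.
by congr (_ * _%:C%C); apply: eq_bigr => i _; rewrite horner_bernstein_rescale.
Qed.

Theorem theorem3 (R : realType) (N : nat) (HN : (1 <= N)%N)
    (Mi : 'I_N -> set R) (U : 'I_N -> set (Cplx R))
    (HMc : compact (prodset Mi))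
    (HUopen : forall i, open (U i))
    (HUconn : forall i, connected (U i))
    (HUne : forall i, U i !=set0)
    (HUsym : forall i (z : R[i]), U i z -> U i (z^*)%C)
    (HMU : forall x, prodset Mi x -> forall i, U i (((x ord0 i)%:C)%C))
    (f : 'rV[R]_N -> R) (Hf : {within prodset Mi, continuous f})
    (eps : R) (Heps : 0 < eps) :
  exists h : nat, (1 <= h)%N /\
    exists (B : 'M[R[i]]_(h, N)) (c : 'I_h -> R[i]),
      (forall x, prodset Mi x -> forall (k : 'I_h) (i : 'I_N), B k i != ((x ord0 i)%:C)%C) /\
      (forall x, prodset Mi x -> `|((f x)%:C)%C - cauchynet B c x| < (eps%:C)%C).
Proof.
(* The extra row of weight 0 makes the width positive. *)
have [h [B [c [BP fB]]]] := continuous_cauchy_approximable HMc Hf Heps.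
have iP : upper_poles (const_mx 'i%C : 'M[R[i]]_(1, N)) by move=> k i; rewrite mxE.
exists (1 + h)%N; split=> //.
exists (col_mx (const_mx 'i%C) B), (cat_weights (fun=> 0) c); split=> [x _ k i|x Mx].
  by rewrite -subr_eq0 subr_real_neq0 // upper_poles_col_mx.
by rewrite cauchynet_col_mx cauchynet0 add0r fB.
Qed.
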